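(* Let $k\ge2$ and let $G,H$ be connected graphs that are not $2$-connected. For vertices $v\in V(G_\perp)$ and $w\in V(H)\setminus V(H_\perp)$ we have $\chi^k_G(v)\ne\chi^k_H(w)$.
   Context: Graphs are finite, simple, undirected (possibly colored). A graph is $2$-connected if it has more than $2$ vertices and removing any one vertex leaves it connected. A separator of $G$ is a set $S$ with $G-S$ disconnected. $P(G)$ is the set of pairs $(S,K)$ with $S$ a separator of minimum cardinality and $K$ the vertex set of a connected component of $G-S$, partially ordered by $(S,K)\le(S',K')$ iff $K\subseteq K'$; $P_0(G)$ is the set of minimal elements; $V(G_\perp):=V(G)\setminus\bigcup_{(S,K)\in P_0(G)}K$. For $k\ge2$, the $k$-dimensional Weisfeiler–Leman algorithm computes a coloring of $V(G)^k$: the initial color of a tuple consists of its input color and the isomorphism type of the ordered induced subgraph on its entries; in each round the new color of $\bar v$ is the pair of its old color and the multiset, over $w\in V(G)$, of the $k$-tuples whose $i$-th component is the old color of $\bar v$ with its $i$-th entry replaced by $w$; the stable coloring is $\chi^k_G$, with canonical colors comparable across graphs. $\chi^k_G(v):=\chi^k_G(v,\dots,v)$. *)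

From mathcomp Require Import all_boot.
Set Implicit Arguments.
Unset Strict Implicit.
Unset Printing Implicit Defensive.

Record cgraph (C : Type) := CGraph {
  vert : finType;
  adj : rel vert;
  adj_sym : symmetric adj;
  adj_irrefl : irreflexive adj;
  vcolor : vert -> C }.

Section Graphs.
Variables (C : Type) (G : cgraph C).
Local Notation V := (vert G).

Definition conn_in (A : {set V}) (x y : V) : bool :=
  connect [rel a b | adj a b && (a \in A) && (b \in A)] x y.

Definition connected_graph : Prop :=
  0 < #|V| /\ forall x y : V, conn_in setT x y.

Definition two_connected : Prop :=
  2 < #|V| /\
  forall x : V, forall y z : V, y != x -> z != x -> conn_in (~: [set x]) y z.

Definition separator (S : {set V}) : Prop :=
  exists x y : V, [/\ x \notin S, y \notin S & ~~ conn_in (~: S) x y].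

Definition min_separator (S : {set V}) : Prop :=
  separator S /\ forall S' : {set V}, separator S' -> #|S| <= #|S'|.

Definition component_of (S K : {set V}) : Prop :=
  exists2 x : V, x \notin S & K = [set y | (y \notin S) && conn_in (~: S) x y].

Definition inP (S K : {set V}) : Prop := min_separator S /\ component_of S K.

Definition inP0 (S K : {set V}) : Prop :=
  inP S K /\ forall S' K', inP S' K' -> K' \subset K -> K \subset K'.

Definition in_perp (v : V) : Prop := forall S K, inP0 S K -> v \notin K.

End Graphs.

Definition tupd (T : Type) (k : nat) (t : 'I_k -> T) (i : 'I_k) (x : T) : 'I_k -> T :=
  fun j => if j == i then x else t j.

Definition wl_init_same (C : Type) (k : nat) (G H : cgraph C)
    (t : 'I_k -> vert G) (u : 'I_k -> vert H) : Prop :=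
  forall i j : 'I_k,
    [/\ vcolor (t i) = vcolor (u i),
        (t i == t j) = (u i == u j)
      & adj (t i) (t j) = adj (u i) (u j)].

(* wl_same k G H r t u : the k-tuples t of G and u of H receive the same
   (canonical) color after r refinement rounds.  Equality of the multisets
   over w of the k-tuples of old colors is expressed by a bijection
   f : V(G) -> V(H) matching w with f w. *)
Fixpoint wl_same (C : Type) (k : nat) (G H : cgraph C) (r : nat)
    (t : 'I_k -> vert G) (u : 'I_k -> vert H) : Prop :=
  match r with
  | 0 => wl_init_same t u
  | r'.+1 =>
      wl_same r' t u /\
      exists f : vert G -> vert H,
        bijective f /\
        forall (w : vert G) (i : 'I_k),
          wl_same r' (tupd t i w) (tupd u i (f w))
  end.

(* chi^k_G(v) = chi^k_H(w) for the stable canonical colorings: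
   the diagonal tuples agree at every round *)
Definition wl_color_eq (C : Type) (k : nat) (G H : cgraph C)
    (v : vert G) (w : vert H) : Prop :=
  forall r : nat, wl_same r (fun _ : 'I_k => v) (fun _ : 'I_k => w).
Arguments wl_color_eq {C} k G H v w.

From mathcomp Require Import all_boot.
From Stdlib Require Import Classical.
Set Implicit Arguments. Unset Strict Implicit. Unset Printing Implicit Defensive.

(* Stable equivalence of k-tuples determines, for any two positions, the
   numbers of walks of each length between the two entries, because the
   refinement supplies one bijection serving every position at once.
   Splitting a walk at its first visit to s shows that these numbers decide
   connectivity in G - s.  So if (s, x) ~ (s', x'), then s is a cut vertex
   iff s' is, and the components of x in G - s and of x' in H - s'
   correspond vertex by vertex.  Let w lie in a minimal component K' of
   H - s' and pick s with (s, v) ~ (s', w).  Then s is a cut vertex, and as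
   v is in G_perp the component of v in G - s is not minimal, so it contains
   a cut vertex s2.  The partner of s2 is a cut vertex lying in K', which a
   minimal component cannot contain. *)

Section Connectivity.
Variables (C : Type) (G : cgraph C).
Local Notation V := (vert G).
Implicit Types (A B S : {set V}) (x y z : V).

Lemma conn_in_sym A x y : conn_in A x y = conn_in A y x.
Proof.
apply: sym_connect_sym => a b /=.
by rewrite (adj_sym (c := G)) -!andbA [(a \in A) && _]andbC.
Qed.

Lemma conn_in_trans A x y z : conn_in A x y -> conn_in A y z -> conn_in A x z.
Proof. exact: connect_trans. Qed.

Lemma conn_in_edge A x y : adj x y -> x \in A -> y \in A -> conn_in A x y.
Proof. by move=> xy xA yA; apply: connect1; rewrite /= xy xA yA. Qed.

Lemma conn_in_closed A x y : conn_in A x y -> (x \in A) = (y \in A).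
Proof.
by apply: closed_connect; apply: (intro_closed (@conn_in_sym A)) => a b /andP[].
Qed.

Lemma conn_in_sub A B x y :
  (forall z, conn_in A x z -> z \in B) -> conn_in A x y -> conn_in B x y.
Proof.
move=> AxB /connectP [p xp ->]; apply/connectP; exists p => //.
apply: (sub_in_path (P := conn_in A x)); last exact: xp.
- by move=> a b /AxB aB /AxB bB /andP[/andP[ab _] _]; rewrite /= ab aB bB.
- by apply/allP; apply: path_connect xp.
Qed.

Lemma conn_in_last_edge x c :
  conn_in setT x c -> x != c -> exists2 u, adj u c & conn_in (~: [set c]) x u.
Proof.
move=> /connectP [p xp ->]; elim: p x xp => [|z p IHp] x /=; first by rewrite eqxx.
case/andP => /andP [/andP [xz _] _] zp xc.
have [zc|zc] := eqVneq z (last z p); first by exists x; [rewrite -zc | exact: connect0].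
have [u uc zu] := IHp z zp zc; exists u => //.
by apply: conn_in_trans zu; apply: conn_in_edge; rewrite ?inE ?(negbTE xc) ?(negbTE zc).
Qed.

Definition component S x : {set V} := [set y | (y \notin S) && conn_in (~: S) x y].

Lemma component_trans S x y z :
  y \in component S x -> conn_in (~: S) y z -> z \in component S x.
Proof.
rewrite !inE => /andP [yS xy] yz.
by rewrite -in_setC -(conn_in_closed yz) in_setC yS (conn_in_trans xy yz).
Qed.

End Connectivity.

Section Separators.
Variables (C : Type) (G : cgraph C).
Local Notation V := (vert G).
Implicit Types (S K : {set V}) (x y z : V).

Lemma proper_subcomponent_mem S x s2 K2 :
  inP [set s2] K2 -> K2 \subset component S x -> ~~ (component S x \subset K2) ->
  s2 \in component S x.
Proof.
case=> _ [x2 x2s2 ->] sub2 /subsetPn [y yK]; apply: contraR => s2K.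
have x2K : x2 \in component S x.
  by apply: (subsetP sub2); rewrite in_set x2s2; exact: connect0.
move: (x2K) (yK); rewrite !inE => /andP [_ xx2] /andP [yS xy].
have x2y : conn_in (~: S) x2 y by apply: conn_in_trans xy; rewrite conn_in_sym.
rewrite (conn_in_sub _ x2y) ?andbT; last first.
  by move=> z /(component_trans x2K) zK; rewrite !inE; apply: contraNneq s2K => <-.
by apply: contraNneq s2K => <-; exact: yK.
Qed.

Hypothesis G_connected : connected_graph G.

Lemma separator_neq0 S : separator S -> S != set0.
Proof.
case=> x [y [_ _]]; apply: contraNneq => ->.
by rewrite setC0; case: G_connected => _ ->.
Qed.

Lemma separator1_min x : separator [set x] -> min_separator [set x].
Proof.
by move=> sx; split=> // S /separator_neq0; rewrite cards1 card_gt0.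
Qed.

Lemma not_two_connected_cut S :
  ~ two_connected G -> separator S -> exists c : V, separator [set c].
Proof.
move=> not2 sS; have /set0Pn [z zS] := separator_neq0 sS.
case: sS => a [b [aS bS nab]].
have /proper_card : [set a; b] \proper [set: V].
  rewrite properT; apply: contraNneq aS => abT.
  have : z \in [set a; b] by rewrite abT inE.
  by rewrite !inE => /orP [] /eqP zab; [rewrite -zab | move: bS; rewrite -zab zS].
have ab : a != b by apply: contraNneq nab => ->; exact: connect0.
rewrite cards2 ab cardsT => V_gt2; apply: NNPP => nocut; apply: not2.
split=> // x y y2 yx y2x.
by apply: NNPP => /negP yz; apply: nocut; exists x, y, y2; rewrite !inE.
Qed.

Lemma min_separator1 S :
  ~ two_connected G -> min_separator S -> exists s, S = [set s].
Proof.
move=> not2 [sS minS]; have [c sc] := not_two_connected_cut not2 sS.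
apply/cards1P; rewrite eqn_leq card_gt0 separator_neq0 // andbT.
by have := minS _ sc; rewrite cards1.
Qed.

Lemma not_perp_min_component w :
  ~ two_connected G -> ~ in_perp w -> exists s K, inP0 [set s] K /\ w \in K.
Proof.
move=> not2 w_nperp.
have [S [K [P0K wK]]] : exists S K, inP0 S K /\ w \in K.
  apply: NNPP => none; apply: w_nperp => S K P0K; apply/negP => wK.
  by apply: none; exists S, K.
by have [s eS] := min_separator1 not2 P0K.1.1; exists s, K; rewrite -eS.
Qed.

Lemma min_component_no_cut s K c : inP0 [set s] K -> c \in K -> ~ separator [set c].
Proof.
case=> [[_ [x0 _ eK]] minK] cK sc; rewrite eK in cK.
have cs : c != s by move: cK; rewrite !inE => /andP [].
have [a [ac a_s]] : exists a, a != c /\ ~~ conn_in (~: [set c]) a s.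
  case: sc => a [b [ac bc nab]]; rewrite !inE in ac bc.
  have [as_|] := boolP (conn_in (~: [set c]) a s); last by exists a.
  exists b; split=> //; apply: contra nab => bs.
  by apply: conn_in_trans as_ _; rewrite conn_in_sym.
have [u uc au] := conn_in_last_edge (proj2 G_connected a c) ac.
have a_avoids_s z : conn_in (~: [set c]) a z -> z != s.
  by move=> az; apply: contraNneq a_s => <-.
have K2K : component [set c] a \subset K.
  apply/subsetP => y; rewrite inE => /andP [_ ay]; rewrite eK.
  apply: (component_trans cK); apply: (conn_in_trans (y := u)).
    by apply: conn_in_edge; rewrite 1?adj_sym // !inE ?cs ?a_avoids_s.
  apply: (conn_in_sub (A := ~: [set c])).
    by move=> z /(conn_in_trans au) /a_avoids_s; rewrite !inE.
  by apply: conn_in_trans ay; rewrite conn_in_sym.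
have P2 : inP [set c] (component [set c] a).
  by split; [exact: separator1_min | exists a; rewrite ?inE].
have /subsetP /(_ c) := minK _ _ P2 K2K.
by rewrite eK => /(_ cK); rewrite !inE eqxx.
Qed.

Lemma perp_component_cut (v s : V) :
  ~ two_connected G -> in_perp v -> separator [set s] -> s != v ->
  exists s2 : V, separator [set s2] /\ s2 \in component [set s] v.
Proof.
move=> not2 v_perp ss sv.
have PK : inP [set s] (component [set s] v).
  by split; [exact: separator1_min | exists v; rewrite // inE eq_sym].
have [S2 [K2 [P2 sub nsub]]] : exists S2 K2,
    [/\ inP S2 K2, K2 \subset component [set s] v & ~ component [set s] v \subset K2].
  apply: NNPP => none.
  suff /v_perp : inP0 [set s] (component [set s] v).
    by rewrite !inE eq_sym sv => /negP[]; exact: connect0.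
  split=> // S' K' P' sub'; apply: NNPP => nsub'.
  by apply: none; exists S', K'.
have [s2 eS2] := min_separator1 not2 P2.1; subst S2.
exists s2; split; first by case: P2.1.
by apply: proper_subcomponent_mem P2 sub _; apply/negP.
Qed.

End Separators.

Section Walks.
Variables (C : Type) (G : cgraph C).
Local Notation V := (vert G).
Implicit Types (s x y : V) (n : nat).

Fixpoint walks n x y : nat :=
  if n is n'.+1 then \sum_(z : V) adj x z * walks n' z y else x == y.

Fixpoint first_visits s n x : nat :=
  if n is n'.+1 then (x != s) * \sum_(z : V) adj x z * first_visits s n' z
  else x == s.

Fixpoint avoiding_walks s n x y : nat :=
  if n is n'.+1 then (x != s) * \sum_(z : V) adj x z * avoiding_walks s n' z y
  else (x == y) && (x != s).

Lemma avoiding_walks_to s n x : avoiding_walks s n x s = 0.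
Proof.
elim: n x => [|n IHn] x /=; first by case: eqVneq => // ->; rewrite eqxx.
by rewrite big1 ?muln0 // => z _; rewrite IHn muln0.
Qed.

Lemma avoiding_walks_from s n y : avoiding_walks s n s y = 0.
Proof. by case: n => [|n] /=; rewrite eqxx ?andbF. Qed.

Lemma walks_first_visit s n x y :
  walks n x y =
  avoiding_walks s n x y + \sum_(i < n.+1) first_visits s i x * walks (n - i) s y.
Proof.
elim: n x => [|n IHn] x; rewrite big_ord_recl /=; case: (eqVneq x s) => [->|xs] /=.
- by rewrite big_ord0 andbF mul1n addn0.
- by rewrite big_ord0 andbT mul0n !addn0.
- rewrite mul0n add0n mul1n -[LHS]addn0; congr (_ + _).
  by rewrite big1 // => i _; rewrite mul0n.
under eq_bigr do rewrite IHn mulnDr big_distrr.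
rewrite big_split !mul1n mul0n add0n /=; congr (_ + _); rewrite exchange_big /=.
apply: eq_bigr => i _; rewrite mul1n add0n subSS big_distrl.
by apply: eq_bigr => z _; rewrite mulnA.
Qed.

Lemma walks_to s n x :
  walks n x s = \sum_(i < n) first_visits s i x * walks (n - i) s s + first_visits s n x.
Proof.
by rewrite (walks_first_visit s) avoiding_walks_to big_ord_recr /= subnn /= eqxx muln1.
Qed.

Lemma avoiding_walks_conn s x y :
  x != s -> conn_in (~: [set s]) x y <-> exists n, 0 < avoiding_walks s n x y.
Proof.
move=> xs; split.
  move=> /connectP [p xp ->] {y}; elim: p x xs xp => [|z p IHp] x xs /=.
    by exists 0; rewrite /= eqxx xs.
  case/andP => /andP [/andP [xz _] zs] zp; rewrite !inE in zs.
  have [n n_gt0] := IHp z zs zp; exists n.+1; rewrite /= xs mul1n (bigD1 z) //= xz.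
  by rewrite mul1n ltn_addr.
case=> n; elim: n x xs => [|n IHn] x xs /=.
  by case: eqVneq => [-> _|]; [exact: connect0|].
rewrite xs mul1n lt0n sum_nat_eq0 negb_forall => /existsP [z] /=.
rewrite -lt0n muln_gt0 lt0b => /andP [xz zy].
have zs : z != s by apply: contraTneq zy => ->; rewrite avoiding_walks_from.
by apply: conn_in_trans (IHn z zs zy); apply: conn_in_edge xz _ _; rewrite !inE.
Qed.

End Walks.

Section WalkInvariants.
Variables (C : Type) (G H : cgraph C).
Variables (s x y : vert G) (s' x' y' : vert H).
Hypothesis walks_xs : forall n, walks n x s = walks n x' s'.
Hypothesis walks_ss : forall n, walks n s s = walks n s' s'.

Lemma eq_first_visits n : first_visits s n x = first_visits s' n x'.
Proof.
elim/ltn_ind: n => n IHn; move: (walks_xs n); rewrite !walks_to.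
suff -> : \sum_(i < n) first_visits s i x * walks (n - i) s s =
          \sum_(i < n) first_visits s' i x' * walks (n - i) s' s' by move/addnI.
by apply: eq_bigr => i _; rewrite IHn ?walks_ss.
Qed.

Hypotheses (walks_xy : forall n, walks n x y = walks n x' y')
           (walks_sy : forall n, walks n s y = walks n s' y').

Lemma eq_avoiding_walks n : avoiding_walks s n x y = avoiding_walks s' n x' y'.
Proof.
move: (walks_xy n); rewrite (walks_first_visit s) (walks_first_visit s').
suff -> : \sum_(i < n.+1) first_visits s i x * walks (n - i) s y =
          \sum_(i < n.+1) first_visits s' i x' * walks (n - i) s' y' by move/addIn.
by apply: eq_bigr => i _; rewrite eq_first_visits walks_sy.
Qed.

Lemma eq_conn_avoid :
  x != s -> x' != s' -> conn_in (~: [set s]) x y = conn_in (~: [set s']) x' y'.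
Proof.
move=> xs x's'; apply/idP/idP.
- case/(avoiding_walks_conn _ xs) => n; rewrite eq_avoiding_walks => n_gt0.
  by apply/(avoiding_walks_conn _ x's'); exists n.
- case/(avoiding_walks_conn _ x's') => n; rewrite -eq_avoiding_walks => n_gt0.
  by apply/(avoiding_walks_conn _ xs); exists n.
Qed.

End WalkInvariants.

Lemma fin_decreasing_witness (T : finType) (P : nat -> T -> Prop) :
  (forall r x, P r.+1 x -> P r x) -> (forall r, exists x, P r x) ->
  exists x, forall r, P r x.
Proof.
move=> Pdec Pex; apply: NNPP => none.
have Ple r r' x : r <= r' -> P r' x -> P r x.
  by move/subnK <-; elim: (r' - r) => // d IHd; rewrite addSn => /Pdec /IHd.
have bound (s : seq T) : exists R, forall x, x \in s -> ~ P R x.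
  elim: s => [|x s [R IH]]; first by exists 0.
  have [Rx nPx] : exists Rx, ~ P Rx x.
    apply: NNPP => allx; apply: none; exists x => r.
    by apply: NNPP => nPx; apply: allx; exists r.
  exists (maxn R Rx) => y; rewrite inE => /predU1P [-> | ys].
    by move/(Ple _ _ _ (leq_maxr R Rx)).
  by move/(Ple _ _ _ (leq_maxl R Rx)); apply: IH.
have [R nPR] := bound (enum T); have [x Px] := Pex R.
by apply: (nPR x); rewrite ?mem_enum.
Qed.

Lemma tupd_same (T : Type) (k : nat) (t : 'I_k -> T) i x : tupd t i x i = x.
Proof. by rewrite /tupd eqxx. Qed.

Lemma tupd_other (T : Type) (k : nat) (t : 'I_k -> T) i j x :
  j != i -> tupd t i x j = t j.
Proof. by rewrite /tupd => /negbTE ->. Qed.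

Section WeisfeilerLeman.
Variables (C : Type) (k : nat).
Local Notation ktuple G := ('I_k -> vert G).
Implicit Types (G H : cgraph C).

Definition wl_equiv G H (t : ktuple G) (u : ktuple H) := forall r, wl_same r t u.

Lemma wl_same_sym G H r (t : ktuple G) (u : ktuple H) : wl_same r t u -> wl_same r u t.
Proof.
elim: r t u => [|r IHr] t u /=.
  by move=> tu i j; have [-> -> ->] := tu i j.
case=> /IHr ut [f [[g fK gK] ext]]; split=> //; exists g; split; first by exists f.
by move=> y i; apply: IHr; have := ext (g y) i; rewrite gK.
Qed.

Lemma wl_equiv_sym G H (t : ktuple G) (u : ktuple H) : wl_equiv t u -> wl_equiv u t.
Proof. by move=> tu r; apply: wl_same_sym. Qed.

Lemma wl_equiv_extend G H (t : ktuple G) (u : ktuple H) : wl_equiv t u ->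
  exists f : vert G -> vert H,
    bijective f /\ forall y i, wl_equiv (tupd t i y) (tupd u i (f y)).
Proof.
move=> tu.
pose P r (f : {ffun vert G -> vert H}) :=
  bijective f /\ forall y i, wl_same r (tupd t i y) (tupd u i (f y)).
have [f Pf] : exists f, forall r, P r f.
  apply: fin_decreasing_witness => r.
    by move=> f [fb ext]; split=> // y i; case: (ext y i).
  have [_ [f [fb ext]]] := tu r.+1; exists (finfun f).
  split=> [|y i]; last by rewrite ffunE; apply: ext.
  by apply: (eq_bij fb) => y; rewrite ffunE.
by exists f; split=> [|y i r]; [case: (Pf 0) | case: (Pf r) => _; apply].
Qed.

Lemma wl_equiv_eq G H (t : ktuple G) (u : ktuple H) i j :
  wl_equiv t u -> (t i == t j) = (u i == u j).
Proof. by move=> tu; have [_ -> _] := tu 0 i j. Qed.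

Lemma wl_equiv_adj G H (t : ktuple G) (u : ktuple H) i j :
  wl_equiv t u -> adj (t i) (t j) = adj (u i) (u j).
Proof. by move=> tu; have [_ _ ->] := tu 0 i j. Qed.

Section Pairs.
Variables (G H : cgraph C).
Implicit Types (t : ktuple G) (u : ktuple H) (i j : 'I_k).

Lemma wl_equiv_walks t u i j n :
  i != j -> wl_equiv t u -> walks n (t i) (t j) = walks n (u i) (u j).
Proof.
move=> ij; have ji : j != i by rewrite eq_sym.
elim: n t u => [|n IHn] t u tu; first by rewrite /= (wl_equiv_eq i j tu).
have [f [fb ext]] := wl_equiv_extend tu.
rewrite /= [RHS](reindex f) /=; last exact: onW_bij.
apply: eq_bigr => y _; congr (_ * _).
  by have := wl_equiv_adj i j (ext y j); rewrite !tupd_same !(tupd_other _ _ ij) => ->.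
by have := IHn _ _ (ext y i); rewrite !tupd_same !(tupd_other _ _ ji).
Qed.

Lemma wl_equiv_diag t u i j :
  i != j -> wl_equiv t u -> wl_equiv (tupd t j (t i)) (tupd u j (u i)).
Proof.
move=> ij tu; have [f [_ ext]] := wl_equiv_extend tu.
have := wl_equiv_eq i j (ext (t i) j).
rewrite !tupd_same !(tupd_other _ _ ij) eqxx => /esym/eqP ->; exact: ext.
Qed.

Lemma wl_equiv_conn_avoid t u i j y y' :
  i != j -> t i != t j -> wl_equiv t u ->
  wl_equiv (tupd t i y) (tupd u i y') -> wl_equiv (tupd t j y) (tupd u j y') ->
  conn_in (~: [set t i]) (t j) y = conn_in (~: [set u i]) (u j) y'.
Proof.
move=> ij tij tu tuiy tujy; have ji : j != i by rewrite eq_sym.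
apply: eq_conn_avoid => [n|n|n|n||].
- exact: wl_equiv_walks ji tu.
- have := wl_equiv_walks n ij (wl_equiv_diag ij tu).
  by rewrite !tupd_same !(tupd_other _ _ ij).
- by have := wl_equiv_walks n ji tuiy; rewrite !tupd_same !(tupd_other _ _ ji).
- by have := wl_equiv_walks n ij tujy; rewrite !tupd_same !(tupd_other _ _ ij).
- by rewrite eq_sym.
- by rewrite eq_sym -(wl_equiv_eq i j tu).
Qed.

Lemma wl_equiv_extend_conn_avoid t u i j y :
  i != j -> t i != t j -> wl_equiv t u ->
  exists y', wl_equiv (tupd t i y) (tupd u i y') /\
    conn_in (~: [set t i]) (t j) y = conn_in (~: [set u i]) (u j) y'.
Proof.
move=> ij tij tu; have [f [_ ext]] := wl_equiv_extend tu.
by exists (f y); split; last exact: wl_equiv_conn_avoid ij tij tu (ext y i) (ext y j).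
Qed.

Lemma wl_equiv_separator t u i j :
  i != j -> wl_equiv t u -> separator [set t i] -> separator [set u i].
Proof.
move=> ij tu [a [b [ai bi nab]]]; rewrite !inE in ai bi.
have ji : j != i by rewrite eq_sym.
have [f [_ ext]] := wl_equiv_extend (wl_equiv_diag ij tu).
have tu2 := ext a i; set t2 := tupd _ i a in tu2; set u2 := tupd _ i (f a) in tu2.
have [t2i t2j] : t2 i = a /\ t2 j = t i.
  by rewrite /t2 !(tupd_other _ _ ji) !tupd_same.
have [u2i u2j] : u2 i = f a /\ u2 j = u i.
  by rewrite /u2 !(tupd_other _ _ ji) !tupd_same.
have [g [_ ext2]] := wl_equiv_extend tu2.
exists (f a), (g b); rewrite !inE; split.
- by have := wl_equiv_eq i j tu2; rewrite t2i t2j u2i u2j => <-.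
- have := wl_equiv_eq i j (ext2 b i).
  by rewrite !tupd_same !(tupd_other _ _ ji) t2j u2j => <-.
- have t2ji : t2 j != t2 i by rewrite t2i t2j eq_sym.
  have := wl_equiv_conn_avoid ji t2ji tu2 (ext2 b j) (ext2 b i).
  by rewrite t2i t2j u2i u2j => <-.
Qed.

End Pairs.
End WeisfeilerLeman.

Theorem lemma8 (C : Type) (k : nat) (G H : cgraph C) (v : vert G) (w : vert H) :
  2 <= k ->
  connected_graph G -> ~ two_connected G ->
  connected_graph H -> ~ two_connected H ->
  in_perp v -> ~ in_perp w ->
  ~ wl_color_eq k G H v w.
Proof.
move=> k_ge2 G_conn G_not2 H_conn H_not2 v_perp w_nperp vw.
pose i0 : 'I_k := Ordinal (ltnW k_ge2); pose i1 : 'I_k := Ordinal k_ge2.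
have i01 : i0 != i1 by [].
have [s' [K' [leafK' wK']]] := not_perp_min_component H_conn H_not2 w_nperp.
have [[[cut_s' _] [x' _ eK']] _] := leafK'.
have s'w : s' != w by move: wK'; rewrite eK' !inE eq_sym => /andP [].
have [f [_ ext]] := wl_equiv_extend (wl_equiv_sym (vw : wl_equiv (fun=> v) (fun=> w))).
have tu := wl_equiv_sym (ext s' i0); set s := f s' in tu.
set t := tupd _ i0 s in tu; set u := tupd _ i0 s' in tu.
have [ti0 ti1] : t i0 = s /\ t i1 = v by rewrite /t tupd_same tupd_other.
have [ui0 ui1] : u i0 = s' /\ u i1 = w by rewrite /u tupd_same tupd_other.
have sv : s != v by have := wl_equiv_eq i0 i1 tu; rewrite ti0 ti1 ui0 ui1 => ->.
have cut_s : separator [set s].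
  by rewrite -ti0; apply: wl_equiv_separator i01 (wl_equiv_sym tu) _; rewrite ui0.
have [s2 [cut_s2 s2K]] := perp_component_cut G_conn G_not2 v_perp cut_s sv.
have tij : t i0 != t i1 by rewrite ti0 ti1.
have [y' [tu2 conn_s2y']] := wl_equiv_extend_conn_avoid s2 i01 tij tu.
have y'K' : y' \in K'.
  rewrite eK' in wK' *; apply: (component_trans wK').
  rewrite -ui0 -ui1 -conn_s2y' ti0 ti1.
  by move: s2K; rewrite inE => /andP [].
apply: (min_component_no_cut H_conn leafK' y'K').
by have := wl_equiv_separator i01 tu2; rewrite !tupd_same => /(_ cut_s2).
Qed.
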